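(* Let $0<\epsilon<1$, $\epsilon_3=\frac{\epsilon}{2|V(H)|}$ and $\epsilon_4=\frac{\epsilon_3}{4k-2}$. For $u,v\in V(H)$, if the shortest path $\pi_{G-D}(u,v)$ is $\epsilon_3$-far away from $V(H)$, then it is an $\epsilon_4$-segment expath.
   Context: $G=(V,E)$ is an undirected graph with $n\ge3$ vertices and real edge weights in $[1,W]$; shortest paths in every subgraph are assumed unique; $\pi_{G'}(x,y)$ is the shortest $x$-$y$ path in $G'$, $\delta_{G'}$ its length, $|P|$ the weighted length of a path $P$, $P[a,b]$ the subpath between $a,b$, and $G-R$ the graph with vertex set $R$ deleted. Let $k=\ln n$. For $R\subseteq V$, $S\subseteq V\setminus R$, an $S$-restricted tree cover of $G-R$ is a family $\{T(w):w\in S\}$ of trees, $T(w)$ a subtree of $G-R$ rooted at $w$, such that (i) for all $u\in S$, $v\in V\setminus R$ there is $w\in S$ with $u,v\in V(T(w))$ and $\mathrm{dep}_{T(w)}(u)+\mathrm{dep}_{T(w)}(v)\le(2k-1)\delta_{G-R}(u,v)$ ($\mathrm{dep}_T(x)$ = weighted distance from $x$ to the root); (ii) each vertex lies in at most $kn^{1/k}(\ln n+1)$ trees. A vertex of such a tree $T$ is a trunk vertex if it lies on the $T$-path between two vertices of $S$; $\mathrm{Trunk}(T)$ is the subtree induced by trunk vertices; $\mathrm{pdeg}_T(v)$ is the degree of $v$ in $\mathrm{Trunk}(T)$ (0 if not trunk). Fix an integer $d\ge2$, a constant $c\ge1$, $s=4e d^{c+1}\ln^2 n+1$; $\mathrm{Hi}(\mathcal{C})$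 is the set of vertices of pseudo-degree $>s$ in some tree of a tree cover $\mathcal{C}$. Fixed tree covers: $\mathcal{T}(S)$ ($S$-restricted, of $G$) and $\mathcal{T}_R(S)$ ($(S\setminus R)$-restricted, of $G-R$), $\mathcal{T}_\varnothing(S)=\mathcal{T}(S)$. Hierarchy tree: root $V$; a node $U$ is a leaf if $\mathrm{Hi}(\mathcal{T}(U))=\varnothing$, else it has children $W_1=\mathrm{Hi}(\mathcal{T}(U))$, $W_i=W_{i-1}\cup\mathrm{Hi}(\mathcal{T}_{W_{i-1}}(U))$ ($2\le i\le d$), recursively. Let $D\subseteq V$, $|D|\le d$, and fix a root-to-node path $V=U_1,\dots,U_p$ in the hierarchy tree, $U_{p+1}=\varnothing$, such that every $f\in D$ has pseudo-degree $\le s$ in every tree of $\mathcal{T}:=\bigcup_{i=1}^p\mathcal{T}_{U_{i+1}}(U_i)$. The level $l(v)$ is the largest $l$ with $v\in U_l$; $G_i$ is the subgraph of $G$ induced by the vertices of level $\le i$. Let $s_0,t_0\in V\setminus D$ be query vertices; for $f\in D$, $T\in\mathcal{T}$ containing $f$, $N_T(f)=\{\mathrm{parent}_T(f)\}\cup(\mathrm{children}_T(f)\cap\mathrm{Trunk}(T))$, $N(f)=\bigcup_T N_T(f)$, and $V(H)=(\{s_0,t_0\}\cup\bigcup_{f\in D}N(f))\setminus D$. A path $P$ from $a$ to $b$ is $\eta$-far away from $V(H)$ if there are no $x\in P\setminus\{a,b\}$, $w\in V(H)$ with $\delta_{G-D}(x,w)\le\eta\cdot\min\{|P[a,x]|,|P[x,b]|\}$.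 $\eta$-segments: for $P=(a=v_0,\dots,v_\ell=b)$ and $1\le i,j<\ell$, $v_i,v_j$ are in the same $\eta$-segment if either both $|P[a,v_i]|,|P[a,v_j]|\le|P|/2$ and $\lfloor\log_{1+\eta}|P[a,v_i]|\rfloor=\lfloor\log_{1+\eta}|P[a,v_j]|\rfloor$, or both $|P[v_i,b]|,|P[v_j,b]|<|P|/2$ and $\lfloor\log_{1+\eta}|P[v_i,b]|\rfloor=\lfloor\log_{1+\eta}|P[v_j,b]|\rfloor$; the classes are contiguous subpaths, and $a,b$ are in no segment. A path $P$ is an $\eta$-segment expath if for every $\eta$-segment $P[x,y]$ of $P$ there is $1\le i\le p$ such that $P[x,y]$ is a shortest path in $G_i$. *)

From HB Require Import structures.
From mathcomp Require Import all_boot all_order all_algebra.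
From mathcomp Require Import all_classical all_reals all_analysis.
Set Implicit Arguments. Unset Strict Implicit. Unset Printing Implicit Defensive.
Import Order.TTheory GRing.Theory Num.Theory.
Local Open Scope ring_scope.

Section Defs.
Variable R : realType.
Variable V : finType.

Section Walks.
Variable wt : V -> V -> R.

Fixpoint plen (P : seq V) : R :=
  match P with
  | x :: ((y :: _) as P') => wt x y + plen P'
  | _ => 0
  end.

Definition is_walk (A : {set V}) (F : rel V) (x y : V) (P : seq V) : bool :=
  match P with
  | [::] => false
  | z :: q => [&& z == x, last z q == y, all (fun v => v \in A) P & path F z q]
  end.

Definition is_shortest (A : {set V}) (F : rel V) (x y : V) (P : seq V) : Prop :=
  is_walk A F x y P /\ forall Q, is_walk A F x y Q -> plen P <= plen Q.

Definition unique_sp (e : rel V) : Prop :=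
  forall (A : {set V}) (F : rel V), subrel F e ->
  forall x y P Q, is_shortest A F x y P -> is_shortest A F x y Q -> P = Q.

Definition dist_le (e : rel V) (A : {set V}) (x y : V) (r : R) : Prop :=
  exists Q, is_walk A e x y Q /\ plen Q <= r.
End Walks.

Record rtree := RTree { tv : {set V}; troot : V; tpar : V -> V }.

Definition anc (T : rtree) (y x : V) : bool :=
  (x \in tv T) && [exists i : 'I_#|V|, iter i (tpar T) x == y].

Definition wf_tree (e : rel V) (A : {set V}) (T : rtree) : Prop :=
  [/\ troot T \in tv T, tv T \subset A, tpar T (troot T) = troot T,
      forall x, x \in tv T -> x != troot T -> (tpar T x \in tv T) && e x (tpar T x)
    & forall x, x \in tv T -> exists i, iter i (tpar T) x = troot T].

Definition dep (wt : V -> V -> R) (T : rtree) (x : V) : R :=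
  \sum_(i < #|V|) (if iter i (tpar T) x != troot T
                   then wt (iter i (tpar T) x) (iter i.+1 (tpar T) x) else 0).

(* x lies on the T-path between a and b *)
Definition onpath (T : rtree) (a b x : V) : bool :=
  (anc T x a || anc T x b) && [forall y, (anc T y a && anc T y b) ==> anc T y x].

Definition trunk (T : rtree) (S : {set V}) (x : V) : bool :=
  [exists a in S, exists b in S, [&& a \in tv T, b \in tv T & onpath T a b x]].

Definition tadj (T : rtree) (x y : V) : bool :=
  [&& x \in tv T, y \in tv T &
      ((x != troot T) && (tpar T x == y)) || ((y != troot T) && (tpar T y == x))].

Definition pdeg (T : rtree) (S : {set V}) (v : V) : nat :=
  if trunk T S v then #|[set y | tadj T v y && trunk T S y]| else 0%N.

Definition nR : R := (#|V|)%:R.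
Definition kk : R := ln nR.
Definition s_param (d : nat) (c : R) : R :=
  4 * expR 1 * powR (d%:R) (c + 1) * (ln nR) ^+ 2 + 1.

Definition is_tree_cover (e : rel V) (wt : V -> V -> R) (A S : {set V})
    (C : V -> rtree) : Prop :=
  [/\ S \subset A,
      forall w, w \in S -> wf_tree e A (C w) /\ troot (C w) = w,
      forall u v P, u \in S -> v \in A -> is_shortest wt A e u v P ->
        exists2 w, w \in S &
          [/\ u \in tv (C w), v \in tv (C w) &
              dep wt (C w) u + dep wt (C w) v <= (2 * kk - 1) * plen wt P]
    & forall x, #|[set w in S | x \in tv (C w)]|%:R
                <= kk * powR nR (kk^-1) * (ln nR + 1)].

Definition Hi (s : R) (C : V -> rtree) (S : {set V}) : {set V} :=
  [set v | [exists w in S, s < (pdeg (C w) S v)%:R]].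

(* cov Rm S w = T(w) in the fixed tree cover T_Rm(S), which is (S \ Rm)-restricted
   tree cover of G - Rm; T(S) = cov finset.set0 S *)
Section Hierarchy.
Variable s : R.
Variable cov : {set V} -> {set V} -> V -> rtree.

Fixpoint Wc (U : {set V}) (i : nat) : {set V} :=
  match i with
  | 0 => finset.set0
  | i'.+1 => Wc U i' :|: Hi s (cov (Wc U i') U) (U :\: Wc U i')
  end.

Definition hchild (d : nat) (U U' : {set V}) : Prop :=
  Hi s (cov finset.set0 U) U != finset.set0 /\ exists2 i, (1 <= i <= d)%N & U' = Wc U i.

Variable p : nat.
Variable U : nat -> {set V}.

Definition Unext (i : nat) : {set V} := if i == p then finset.set0 else U i.+1.
Definition Sidx (i : nat) : {set V} := U i :\: Unext i.
Definition Ttree (i : nat) (w : V) : rtree := cov (Unext i) (U i) w.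
(* (i, w) indexes a tree of calT = U_{i=1}^p T_{U_{i+1}}(U_i) *)
Definition in_calT (i : nat) (w : V) : bool := (1 <= i <= p)%N && (w \in Sidx i).

Definition lvl (v : V) : nat := \max_(l < p.+1 | (0 < l)%N && (v \in U l)) l.
Definition Gset (i : nat) : {set V} := [set v | (lvl v <= i)%N].

Definition Nf (f : V) : {set V} :=
  [set x | [exists i : 'I_p.+1, exists w,
     [&& in_calT i w, f \in tv (Ttree i w) &
       ((f != troot (Ttree i w)) && (x == tpar (Ttree i w) f)) ||
       [&& x \in tv (Ttree i w), x != troot (Ttree i w), tpar (Ttree i w) x == f
         & trunk (Ttree i w) (Sidx i) x]]]].

Definition VH (D : {set V}) (s0 t0 : V) : {set V} :=
  ([set s0; t0] :|: \bigcup_(f in D) Nf f) :\: D.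
End Hierarchy.

Section Segments.
Variable wt : V -> V -> R.
Variable a : V.  (* default vertex for nth (the start of P) *)

Definition pre (P : seq V) (i : nat) : R := plen wt (take i.+1 P).
Definition suf (P : seq V) (i : nat) : R := plen wt (drop i P).

Definition far (e : rel V) (A X : {set V}) (eta : R) (P : seq V) : Prop :=
  forall i, (0 < i < (size P).-1)%N -> forall w, w \in X ->
    ~ dist_le wt e A (nth a P i) w (eta * Num.min (pre P i) (suf P i)).

Definition flog (eta r : R) : int := Num.floor (ln r / ln (1 + eta)).

Definition seg_rel (eta : R) (P : seq V) (i j : nat) : bool :=
  let L := plen wt P in
  [&& pre P i <= L / 2, pre P j <= L / 2 & flog eta (pre P i) == flog eta (pre P j)]
  || [&& suf P i < L / 2, suf P j < L / 2 & flog eta (suf P i) == flog eta (suf P j)].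

Definition is_segment (eta : R) (P : seq V) (i j : nat) : Prop :=
  [/\ (0 < i)%N, (i <= j)%N, (j < (size P).-1)%N, seg_rel eta P i j
    & forall m, (0 < m < (size P).-1)%N -> seg_rel eta P i m -> (i <= m <= j)%N].

Definition subpath (P : seq V) (i j : nat) : seq V := drop i (take j.+1 P).

Definition expath (e : rel V) (p : nat) (G : nat -> {set V}) (eta : R) (P : seq V) : Prop :=
  forall i j, is_segment eta P i j ->
    exists2 l, (1 <= l <= p)%N &
      is_shortest wt (G l) e (nth a P i) (nth a P j) (subpath P i j).
End Segments.
End Defs.

From Pilot Require Import Defs.
From HB Require Import structures.
From mathcomp Require Import all_boot all_order all_algebra.
From mathcomp Require Import all_classical all_reals all_analysis.
From mathcomp Require Import zify ring lra.
Import Order.TTheory GRing.Theory Num.Theory.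
Local Open Scope ring_scope.
Set Implicit Arguments. Unset Strict Implicit. Unset Printing Implicit Defensive.

(* Let P[x, y] be an eps4-segment of P and z a vertex of maximal level l on it, so that
   P[x, y] lies in G_l.  If a walk Q of G_l from x to y were shorter than P[x, y], it would
   have to meet a failed vertex f, since P is a shortest path of G - D.  Going back along P
   from z to x and then along Q to f is a walk of G - U_(l+1) of length < 2 |P[x, y]|, and z
   lies in U_l \ U_(l+1); so some tree T(w) of T_(U_(l+1))(U_l) contains z and f with
   dep z + dep f <= (2k - 1) 2 |P[x, y]|.  Walking in T(w) from z towards f through the root,
   the first failed vertex met is entered from a parent or a trunk child, a vertex of V(H)
   at distance <= dep z + dep f from z in G - D.  As the segment is short,
   2 (2k - 1) |P[x, y]| <= eps3 min(|P[a, z]|, |P[z, b]|), contradicting farness. *)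


Lemma flog_close (R : realType) (eta a b : R) : 0 < eta -> 0 < a -> 0 < b ->
  flog eta a = flog eta b -> b <= (1 + eta) * a.
Proof.
move=> eta_gt0 a_gt0 b_gt0; rewrite /flog => E.
have t_gt0 : 0 < ln (1 + eta) by apply: ln_gt0; rewrite ltrDl.
set t := ln (1 + eta) in t_gt0 *.
have [Fa _] := andP (floor_itv (ln a / t)).
have [_ Fb] := andP (floor_itv (ln b / t)).
rewrite -E intrD in Fb.
have Hlt : ln b / t < ln a / t + 1 by apply: lt_le_trans Fb _; rewrite lerD2r.
have {Hlt} : ln b < ln a + t.
  by move: Hlt; rewrite ltr_pdivrMr // mulrDl mul1r divfK ?gt_eqF.
rewrite -ler_ln ?posrE ?mulr_gt0 ?addr_gt0 // lnM ?posrE ?addr_gt0 // addrC.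
exact: ltW.
Qed.

Section Walks.
Variables (R : realType) (V : finType) (wt : V -> V -> R) (F : rel V).
Local Notation plen := (plen wt).

Lemma plen_cons2 x y s : plen [:: x, y & s] = wt x y + plen (y :: s).
Proof. by []. Qed.

Lemma plen_cat x s t : plen (x :: s ++ t) = plen (x :: s) + plen (last x s :: t).
Proof.
elim: s x => [|y s IH] x; first by rewrite add0r.
by rewrite cat_cons plen_cons2 IH plen_cons2 addrA.
Qed.

Lemma plen_take_drop P i :
  (i < size P)%N -> plen P = plen (take i.+1 P) + plen (drop i P).
Proof.
elim: P i => [//|x s IH] [|i]; first by rewrite take_cons take0 add0r drop0.
case: s IH => [//|y s] IH Hi.
by rewrite plen_cons2 (IH i Hi) take_cons plen_cons2 drop_cons addrA.
Qed.

Lemma plen_rcons x s y : plen (rcons (x :: s) y) = plen (x :: s) + wt (last x s) y.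
Proof. by rewrite rcons_cons -cats1 plen_cat plen_cons2 addr0. Qed.

Lemma plen_rev (wt_sym : forall x y, wt x y = wt y x) s : plen (rev s) = plen s.
Proof.
elim: s => [//|x s IH]; case: s IH => [//|y s] IH.
rewrite rev_cons; case E: (rev (y :: s)) => [|h t].
  by move: (congr1 size E); rewrite size_rev.
have Ey : last h t = y by rewrite -[last h t]/(last h (h :: t)) -E rev_cons last_rcons.
by rewrite plen_rcons -E IH plen_cons2 Ey wt_sym addrC.
Qed.

Lemma is_walk_cons (A : {set V}) a b z q :
  is_walk A F a b (z :: q) = [&& z == a, last z q == b, all (mem A) (z :: q) & path F z q].
Proof. by []. Qed.

Section OneWalk.
Variables (A : {set V}) (a b : V) (s : seq V).
Hypothesis Hs : is_walk A F a b s.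

Lemma walk_mem : {subset s <= A}.
Proof. by case: s Hs => [//|z q] /and4P[_ _ /allP]. Qed.

Lemma walk_end_mem : b \in A.
Proof. by case: s Hs => [//|z q] /and4P[_ /eqP <- /allP Ha _]; apply/Ha/mem_last. Qed.

Lemma walk_head : exists q, s = a :: q.
Proof. by case: s Hs => [//|z q] /and4P[/eqP-> _ _ _]; exists q. Qed.

Lemma walk_restrict (B : {set V}) : {subset s <= B} -> is_walk B F a b s.
Proof.
case: s Hs => [//|z q] /and4P[Hz Hl _ Hp] sB.
by apply/and4P; split => //; apply/allP.
Qed.

Lemma walk_subset (B : {set V}) : {subset A <= B} -> is_walk B F a b s.
Proof. by move=> sAB; apply: walk_restrict => x /walk_mem /sAB. Qed.

Lemma walk_take i : (i < size s)%N -> is_walk A F a (nth a s i) (take i.+1 s).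
Proof.
case: s Hs => [//|z q] /and4P[/eqP-> Hl Ha Hp] Hi; rewrite take_cons is_walk_cons.
apply/and4P; split => //.
- rewrite (last_nth a) size_take; rewrite /= in Hi.
  case: ltnP => H.
    by rewrite -[a :: take i q]/(take i.+1 (a :: q)) nth_take.
  have -> : i = size q by apply/eqP; rewrite eqn_leq H -ltnS Hi.
  by rewrite take_size.
- apply/allP => x Hx; apply: (allP Ha).
  by move: Hx; rewrite -[_ :: take i q]/(take i.+1 (_ :: q)) => /mem_take.
- exact: take_path.
Qed.
End OneWalk.

Lemma walk_behead (A : {set V}) a b z y q :
  is_walk A F a b [:: z, y & q] -> is_walk A F y b (y :: q).
Proof. by rewrite !is_walk_cons /= => /and4P[_ -> /andP[_ ->] /andP[_ ->]]; rewrite eqxx. Qed.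

Lemma walk_drop (A : {set V}) a b s i : is_walk A F a b s -> (i < size s)%N ->
  is_walk A F (nth a s i) b (drop i s).
Proof.
elim: s a i => [//|z q IH] a [|i] Hw Hi.
  by rewrite drop0 /=; case/walk_head: (Hw) => q' [Ez _]; rewrite Ez in Hw *.
case: q IH Hw Hi => [//|y q] IH Hw Hi /=.
by rewrite (set_nth_default y) //; apply: IH (walk_behead Hw) Hi.
Qed.

Lemma walk_cat (A : {set V}) a b c s t :
  is_walk A F a b s -> is_walk A F b c t -> is_walk A F a c (s ++ behead t).
Proof.
case: s => [//|z q]; case: t => [//|y r]; rewrite !is_walk_cons.
move=> /and4P[Hz /eqP Hl Ha Hp] /and4P[/eqP Hy Hl2 Ha2 Hp2].
rewrite ?cat_cons Hz last_cat Hl -Hy Hl2 /= all_cat.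
move: Ha Ha2 => /= /andP[-> ->] /andP[_ ->].
by rewrite cat_path Hp Hl -Hy Hp2.
Qed.

Lemma plen_walk_cat (A : {set V}) a b c s t :
  is_walk A F a b s -> is_walk A F b c t -> plen (s ++ behead t) = plen s + plen t.
Proof.
case: s => [//|z q]; case: t => [//|y r]; rewrite !is_walk_cons.
by move=> /and4P[_ /eqP Hl _ _] /and4P[/eqP Hy _ _ _]; rewrite cat_cons plen_cat Hl Hy.
Qed.

Lemma walk_rev (A : {set V}) a b s : symmetric F ->
  is_walk A F a b s -> is_walk A F b a (rev s).
Proof.
move=> Fsym; case: s => [//|z q]; rewrite [z :: q]lastI rev_rcons !is_walk_cons -lastI.
move=> /and4P[Hz -> Ha Hp].
rewrite -rev_rcons all_rev -lastI Ha.
have -> : last (last z q) (rev (belast z q)) = z.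
  by case: q {Ha Hp} => [//|y q] /=; rewrite rev_cons last_rcons.
rewrite Hz rev_path /=.
by rewrite (@eq_path _ _ F) // => x y; rewrite Fsym.
Qed.

Section NonnegWeights.
Hypothesis wt_ge0 : forall x y, F x y -> 0 <= wt x y.

Lemma plen_path_ge0 z q : path F z q -> 0 <= plen (z :: q).
Proof.
elim: q z => [//|y q IH] z /andP[Fzy Hp].
by rewrite plen_cons2 addr_ge0 ?wt_ge0 ?IH.
Qed.

Lemma plen_walk_ge0 (A : {set V}) a b s : is_walk A F a b s -> 0 <= plen s.
Proof. by case: s => [//|z q] /and4P[_ _ _ /plen_path_ge0]. Qed.

Lemma plen_take_le (A : {set V}) a b s i :
  is_walk A F a b s -> plen (take i.+1 s) <= plen s.
Proof.
move=> Hw; case: (ltnP i (size s)) => Hi; last by rewrite take_oversize ?leqW.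
by rewrite [leRHS](plen_take_drop Hi) lerDl (plen_walk_ge0 (walk_drop Hw Hi)).
Qed.

Lemma plen_drop_le (A : {set V}) a b s i :
  is_walk A F a b s -> (i < size s)%N -> plen (drop i s) <= plen s.
Proof.
move=> Hw Hi.
by rewrite [leRHS](plen_take_drop Hi) lerDr (plen_walk_ge0 (walk_take Hw Hi)).
Qed.

Lemma walk_uniq (A : {set V}) a b s : is_walk A F a b s ->
  exists2 s', is_walk A F a b s' & uniq s' && (plen s' <= plen s).
Proof.
elim: s a => [//|z q IH] a Hw.
case: q IH Hw => [|y q] IH Hw; first by exists [:: z] => //; rewrite /= lexx.
have [s' Hw' /andP[Us' Ls']] := IH y (walk_behead Hw).
move: (Hw); rewrite is_walk_cons => /and4P[/eqP Hza _ HA /andP[Fzy _]]; subst z.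
have Hay : is_walk A F a y [:: a; y].
  by move: HA; rewrite is_walk_cons /= Fzy !eqxx => /and3P[-> -> _].
case Has: (a \in s').
  have Hk : (index a s' < size s')%N by rewrite index_mem.
  have Hwd := walk_drop Hw' Hk; rewrite nth_index // in Hwd.
  exists (drop (index a s') s') => //; apply/andP; split; first exact: drop_uniq.
  apply: le_trans (plen_drop_le Hw' Hk) _; apply: le_trans Ls' _.
  by rewrite plen_cons2 lerDr wt_ge0.
exists ([:: a; y] ++ behead s'); first exact: walk_cat Hay Hw'.
have [r Er] := walk_head Hw'.
rewrite (plen_walk_cat Hay Hw') plen_cons2 addr0 lerD2l Ls' andbT.
by rewrite Er /= -Er Has; rewrite Er in Us'.
Qed.
End NonnegWeights.

Fixpoint seqs_upto (n : nat) : seq (seq V) :=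
  if n is n'.+1 then [::] :: [seq x :: s | x <- enum V, s <- seqs_upto n'] else [:: [::]].

Lemma seqs_uptoP n s : (size s <= n)%N -> s \in seqs_upto n.
Proof.
elim: n s => [|n IH] [|x s] //=; rewrite ?inE // ltnS => Hs.
by apply/orP; right; apply/allpairsP; exists (x, s); rewrite mem_enum IH.
Qed.

Lemma seq_plen_min (L : seq (seq V)) : L != [::] ->
  exists2 m, m \in L & forall s, s \in L -> plen m <= plen s.
Proof.
elim: L => [//|x L IH] _.
have [->|/IH [m Hm Hmin]] := eqVneq L [::].
  by exists x; rewrite ?inE // => s; rewrite inE => /eqP->.
have [Hxm|Hmx] := leP (plen x) (plen m).
  exists x; first by rewrite inE eqxx.
  by move=> s; rewrite inE => /predU1P[->//|/Hmin]; apply: le_trans.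
exists m; first by rewrite inE Hm orbT.
by move=> s; rewrite inE => /predU1P[->|/Hmin//]; apply: ltW.
Qed.

Lemma exists_shortest (A : {set V}) a b s :
  (forall x y, F x y -> 0 <= wt x y) -> is_walk A F a b s ->
  exists2 P, is_shortest wt A F a b P & plen P <= plen s.
Proof.
move=> wt_ge0 Hw.
pose L := [seq t <- seqs_upto #|V| | is_walk A F a b t].
have uniq_inL t : is_walk A F a b t -> uniq t -> t \in L.
  by move=> Ht Ut; rewrite mem_filter Ht seqs_uptoP // -(card_uniqP Ut) max_card.
have [s1 Hs1 /andP[U1 L1]] := walk_uniq wt_ge0 Hw.
have inL := uniq_inL _ Hs1 U1.
have [|m] := @seq_plen_min L; first by apply/eqP => E; rewrite E in inL.
rewrite mem_filter => /andP[Hwm _] Hmin.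
exists m; last exact: le_trans (Hmin _ inL) L1.
split => // Q HQ.
have [Q1 HQ1 /andP[UQ LQ]] := walk_uniq wt_ge0 HQ.
exact: le_trans (Hmin _ (uniq_inL _ HQ1 UQ)) LQ.
Qed.

Section Subpaths.
Variables (A : {set V}) (a b : V) (P : seq V).
Hypothesis HP : is_walk A F a b P.
Local Notation pre := (pre wt P).
Local Notation suf := (suf wt P).

Lemma plen_pre_suf i : (i < size P)%N -> plen P = pre i + suf i.
Proof. exact: plen_take_drop. Qed.

Lemma plen_subpath i j : (i <= j)%N -> (j < size P)%N ->
  plen (subpath P i j) = pre j - pre i.
Proof.
move=> Hij Hj; have Hi : (i < size (take j.+1 P))%N by rewrite size_takel.
by rewrite /subpath /Defs.pre [plen (take j.+1 P)](plen_take_drop Hi) take_takel // addrC addKr.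
Qed.

Lemma walk_subpath i j : (i <= j)%N -> (j < size P)%N ->
  is_walk A F (nth a P i) (nth a P j) (subpath P i j).
Proof.
move=> Hij Hj; have Hi : (i < size (take j.+1 P))%N by rewrite size_takel.
by have := walk_drop (walk_take HP Hj) Hi; rewrite nth_take.
Qed.

Lemma mem_subpath i j x : (j < size P)%N -> x \in subpath P i j ->
  exists k, [/\ (i <= k)%N, (k <= j)%N & x = nth a P k].
Proof.
move=> Hj /(nthP a)[k Hk <-]; exists (i + k)%N.
move: Hk; rewrite size_drop size_takel // ltn_subRL => Hk.
by rewrite /subpath nth_drop nth_take // leq_addr.
Qed.

Lemma pre_mono (wt_ge0 : forall x y, F x y -> 0 <= wt x y) i k :
  (i <= k)%N -> (k < size P)%N -> pre i <= pre k.
Proof.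
move=> Hik Hk; rewrite /Defs.pre -(take_takel P (_ : i.+1 <= k.+1)%N) //.
exact: (plen_take_le wt_ge0 i (walk_take HP Hk)).
Qed.

Lemma suf_anti (wt_ge0 : forall x y, F x y -> 0 <= wt x y) i k :
  (i <= k)%N -> (k < size P)%N -> suf k <= suf i.
Proof.
move=> Hik Hk; have Hi : (i < size P)%N by apply: leq_ltn_trans Hk.
have := pre_mono wt_ge0 Hik Hk; have := plen_pre_suf Hi; have := plen_pre_suf Hk.
lra.
Qed.

Section WeightsAtLeastOne.
Hypothesis wt_ge1 : forall x y, F x y -> 1 <= wt x y.

Let wt_ge0 x y : F x y -> 0 <= wt x y.
Proof. by move/wt_ge1; apply: le_trans. Qed.

Lemma plen_walk_ge1 (B : {set V}) x y s : is_walk B F x y s -> (1 < size s)%N -> 1 <= plen s.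
Proof.
case: s => [//|z [//|w q]] /and4P[_ _ _ /andP[Fzw Hp]] _.
by rewrite plen_cons2 -[1]addr0 lerD ?wt_ge1 ?plen_path_ge0.
Qed.

Lemma pre_ge1 i : (0 < i)%N -> (i < size P)%N -> 1 <= pre i.
Proof. by move=> Hi Hs; apply: plen_walk_ge1 (walk_take HP Hs) _; rewrite size_takel. Qed.

Lemma suf_ge1 i : (i < (size P).-1)%N -> 1 <= suf i.
Proof.
move=> Hi; have Hs : (i < size P)%N by apply: leq_trans Hi (leq_pred _).
by apply: plen_walk_ge1 (walk_drop HP Hs) _; rewrite size_drop; lia.
Qed.
End WeightsAtLeastOne.
End Subpaths.

Lemma shortest_subpath (A : {set V}) a b P i j :
  is_shortest wt A F a b P -> (i <= j)%N -> (j < size P)%N ->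
  is_shortest wt A F (nth a P i) (nth a P j) (subpath P i j).
Proof.
move=> [HP Hmin] Hij Hj; split; first exact: (walk_subpath HP Hij Hj).
move=> Q HQ; have Hi : (i < size P)%N by apply: leq_ltn_trans Hj.
have Hpre := walk_take HP Hi; have Hsuf := walk_drop HP Hj.
have := Hmin _ (walk_cat Hpre (walk_cat HQ Hsuf)).
rewrite (plen_walk_cat Hpre (walk_cat HQ Hsuf)) (plen_walk_cat HQ Hsuf).
rewrite (plen_subpath Hij Hj) (plen_pre_suf Hj).
rewrite -[plen (take i.+1 P)]/(pre wt P i) -[plen (drop j P)]/(suf wt P j).
lra.
Qed.

Lemma shorter_walk_leaves (A B : {set V}) a b P i j Q :
  is_shortest wt A F a b P -> (i <= j)%N -> (j < size P)%N ->
  is_walk B F (nth a P i) (nth a P j) Q -> plen Q < plen (subpath P i j) ->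
  exists2 f, f \in Q & f \notin A.
Proof.
move=> HP Hij Hj HQ HQlt; apply/hasP; apply: contraTT HQlt => /hasPn HQA; rewrite -leNgt.
by apply: (shortest_subpath HP Hij Hj).2; apply: (walk_restrict HQ) => x /HQA /negPn.
Qed.

Lemma dist_le_weaken (A : {set V}) x y d d' :
  dist_le wt F A x y d -> d <= d' -> dist_le wt F A x y d'.
Proof. by move=> [Q [HQ HQd]] Hd; exists Q; split => //; apply: le_trans Hd. Qed.

Lemma segment_plen_le (wt_ge1 : forall x y, F x y -> 1 <= wt x y) (A : {set V}) a b P eta i j k :
  is_walk A F a b P -> 0 < eta -> is_segment wt eta P i j -> (i <= k <= j)%N ->
  plen (subpath P i j) <= eta * Num.min (pre wt P k) (suf wt P k).
Proof.
move=> HP eta_gt0 [Hi0 Hij Hj Hseg _] /andP[Hik Hkj].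
have wt_ge0 x y : F x y -> 0 <= wt x y by move/wt_ge1; apply: le_trans.
have Hjs : (j < size P)%N by apply: leq_trans Hj (leq_pred _).
have Hks : (k < size P)%N by apply: leq_ltn_trans Hkj Hjs.
have His : (i < size P)%N by apply: leq_ltn_trans Hik Hks.
have Lk := plen_pre_suf Hks; rewrite plen_subpath //.
case/orP: Hseg => /and3P[Si Sj /eqP E].
  have Hij_pre := flog_close eta_gt0 (lt_le_trans ltr01 (pre_ge1 HP wt_ge1 Hi0 His))
    (lt_le_trans ltr01 (pre_ge1 HP wt_ge1 (leq_trans Hi0 Hij) Hjs)) E.
  have Hkj_pre := pre_mono HP wt_ge0 Hkj Hjs; have Hik_pre := pre_mono HP wt_ge0 Hik Hks.
  rewrite min_l; last by lra.
  by apply: le_trans (_ : eta * pre wt P i <= _); [lra | rewrite ler_pM2l].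
have Hji_suf := flog_close eta_gt0 (lt_le_trans ltr01 (suf_ge1 HP wt_ge1 Hj))
  (lt_le_trans ltr01 (suf_ge1 HP wt_ge1 (leq_ltn_trans Hij Hj))) (esym E).
have Hik_suf := suf_anti HP wt_ge0 Hik Hks; have Hkj_suf := suf_anti HP wt_ge0 Hkj Hjs.
have Li := plen_pre_suf His; have Lj := plen_pre_suf Hjs.
rewrite min_r; last by lra.
by apply: le_trans (_ : eta * suf wt P j <= _); [lra | rewrite ler_pM2l].
Qed.

Lemma walk_detour (wt_sym : forall x y, wt x y = wt y x) (F_sym : symmetric F)
    (wt_ge0 : forall x y, F x y -> 0 <= wt x y) (A : {set V}) x y z f s Q :
  is_walk A F x z s -> is_walk A F x y Q -> f \in Q ->
  exists2 W, is_walk A F z f W & plen W <= plen s + plen Q.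
Proof.
move=> Hs HQ HfQ; have Hk : (index f Q < size Q)%N by rewrite index_mem.
have HQf := walk_take HQ Hk; rewrite nth_index // in HQf.
have Hsr := walk_rev F_sym Hs.
exists (rev s ++ behead (take (index f Q).+1 Q)); first exact: walk_cat Hsr HQf.
by rewrite (plen_walk_cat Hsr HQf) plen_rev // lerD2l (plen_take_le wt_ge0 _ HQ).
Qed.
End Walks.

Definition tree_nbr (V : finType) (T : rtree V) (S : {set V}) (f x : V) : bool :=
  ((f != troot T) && (x == tpar T f)) ||
  [&& x \in tv T, x != troot T, tpar T x == f & trunk T S x].

Section Trees.
Variables (R : realType) (V : finType) (wt : V -> V -> R) (e : rel V).
Variables (B : {set V}) (T : rtree V).
Hypothesis wfT : wf_tree e B T.
Local Notation par := (tpar T).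
Local Notation r := (troot T).
Local Notation plen := (plen wt).

Lemma troot_in : r \in tv T. Proof. by case: wfT. Qed.

Lemma tpar_troot : par r = r. Proof. by case: wfT. Qed.

Lemma iter_troot i : iter i par r = r.
Proof. by elim: i => [//|i IH]; rewrite iterS IH tpar_troot. Qed.

Lemma iter_after_troot x i j : iter i par x = r -> (i <= j)%N -> iter j par x = r.
Proof. by move=> Hi /subnK <-; rewrite iterD Hi iter_troot. Qed.

Lemma iter_tv x i : x \in tv T -> iter i par x \in tv T.
Proof.
case: wfT => _ _ _ Hpar _ Hx; elim: i => [//|i IH]; rewrite iterS.
have [->|Hne] := eqVneq (iter i par x) r; first by rewrite tpar_troot troot_in.
by case/andP: (Hpar _ IH Hne).
Qed.

Lemma chain_walk (C : {set V}) x k : x \in tv T ->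
  (forall i, (i < k)%N -> iter i par x != r) -> (forall i, (i <= k)%N -> iter i par x \in C) ->
  is_walk C e x (iter k par x) (traject par x k.+1).
Proof.
move=> Hx Hne HC; rewrite trajectS is_walk_cons eqxx last_traject eqxx -trajectS.
apply/and4P; split => //.
  by apply/allP => y /trajectP[i Hi ->]; apply: HC.
case: wfT => _ _ _ Hpar _.
elim: k x Hx Hne {HC} => [//|k IH] x Hx Hne; rewrite trajectS /=.
apply/andP; split; first by case/andP: (Hpar _ Hx (Hne 0%N isT)).
apply: IH => [|i Hi]; first exact: (iter_tv 1 Hx).
by rewrite -iterSr Hne.
Qed.

Lemma plen_traject x n :
  plen (traject par x n.+1) = \sum_(i < n) wt (iter i par x) (iter i.+1 par x).
Proof.
elim: n x => [|n IH] x; first by rewrite big_ord0.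
rewrite trajectS trajectS plen_cons2 -trajectS IH big_ord_recl.
by congr (_ + _); apply: eq_bigr => i _; rewrite -!iterSr.
Qed.

Lemma root_chain x : x \in tv T -> exists n, [/\ (n < #|V|)%N, iter n par x = r,
  forall i, (i < n)%N -> iter i par x != r & dep wt T x = plen (traject par x n.+1)].
Proof.
move=> Hx.
have exP : exists n, iter n par x == r.
  by case: wfT => _ _ _ _ /(_ _ Hx) [i Hi]; exists i; apply/eqP.
case: (ex_minnP exP) => n /eqP Hn Hmin.
have Hne i : (i < n)%N -> iter i par x != r.
  by move=> Hi; apply/negP => /Hmin; rewrite leqNgt Hi.
have Hnv : (n < #|V|)%N.
  have U : uniq (traject par x n.+1).
    rewrite looping_uniq; apply/negP => /trajectP[i Hi E].
    by move: (Hne i Hi); rewrite -E Hn eqxx.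
  by move: (card_uniqP U); rewrite size_traject => <-; apply: max_card.
exists n; split => //.
pose w i := wt (iter i par x) (iter i.+1 par x).
rewrite plen_traject /dep -(big_mkord xpredT (fun i => if iter i par x != r then w i else 0)).
rewrite -(big_mkord xpredT w).
rewrite (big_cat_nat _ (ltnW Hnv)) //= [X in _ + X]big_nat_cond [X in _ + X]big1 ?addr0.
  by apply: eq_big_nat => i /andP[_ Hi]; rewrite Hne.
by move=> i /andP[/andP[Hi _] _]; rewrite (iter_after_troot Hn Hi) eqxx.
Qed.

Lemma dep_ge0 (wt_ge0 : forall x y, e x y -> 0 <= wt x y) x : x \in tv T -> 0 <= dep wt T x.
Proof.
move=> Hx; have [n [_ _ Hne ->]] := root_chain Hx.
have HC i : (i <= n)%N -> iter i par x \in [set: V] by rewrite inE.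
exact: (plen_walk_ge0 wt_ge0 (chain_walk Hx Hne HC)).
Qed.

Lemma trunk_iter (S : {set V}) z k : r \in S -> z \in S -> z \in tv T -> (k < #|V|)%N ->
  trunk T S (iter k par z).
Proof.
move=> HrS HzS Hz Hk; apply/existsP; exists z; rewrite HzS; apply/existsP; exists r.
rewrite HrS Hz troot_in /onpath /=; apply/andP; split.
  by rewrite /anc Hz; apply/orP; left; apply/existsP; exists (Ordinal Hk).
apply/forallP => y; apply/implyP => /andP[_ /andP[_ /existsP[j /eqP <-]]].
have Hkz := iter_tv k Hz; have [n [Hn Hr _ _]] := root_chain Hkz.
by rewrite iter_troot /anc Hkz; apply/existsP; exists (Ordinal Hn); rewrite /= Hr.
Qed.

Section NonnegWeights.
Hypothesis wt_ge0 : forall x y, e x y -> 0 <= wt x y.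
Variable D : {set V}.

Lemma escape_up z m : z \in tv T -> z \notin D -> iter m par z \in D ->
  exists k, [/\ (k < #|V|)%N, iter k par z \notin D, iter k par z != r,
    par (iter k par z) \in D & dist_le wt e (~: D) z (iter k par z) (dep wt T z)].
Proof.
move=> Hz HzD Hm; have exP : exists m, iter m par z \in D by exists m.
case: (ex_minnP exP) => -[|k] Hk Hmin; first by rewrite (negbTE HzD) in Hk.
have HkD i : (i <= k)%N -> iter i par z \notin D.
  by move=> Hi; apply/negP => /Hmin; rewrite ltnNge Hi.
have [nz [Hnz Hrz Hne dep_z]] := root_chain Hz.
have Hkr : iter k par z != r.
  by apply: contraNneq (HkD k (leqnn k)) => E; rewrite E -tpar_troot -E.
have Hknz : (k < nz)%N.
  by rewrite ltnNge; apply: contraNN Hkr => /(iter_after_troot Hrz) ->.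
have HC i : (i <= nz)%N -> iter i par z \in [set: V] by rewrite inE.
have Wz := chain_walk Hz Hne HC.
exists k; split => //; [exact: ltn_trans Hknz Hnz | exact: HkD | ].
exists (traject par z k.+1); split.
  apply: chain_walk Hz _ _ => i Hi; last by rewrite inE HkD.
  by apply: Hne; apply: ltn_trans Hi Hknz.
by rewrite dep_z -(@take_traject _ _ nz.+1 k.+1) ?(plen_take_le wt_ge0 _ Wz) // ltnW.
Qed.

Lemma escape_down (wt_sym : forall x y, wt x y = wt y x) (e_sym : symmetric e) z f :
  z \in tv T -> f \in tv T -> f \in D -> (forall m, iter m par z \notin D) ->
  exists m, [/\ iter m par f \in D, iter m par f != r, par (iter m par f) \notin D
    & dist_le wt e (~: D) z (par (iter m par f)) (dep wt T z + dep wt T f)].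
Proof.
move=> Hz Hf HfD HzD.
have [nz [_ Hrz Hnez dep_z]] := root_chain Hz.
have [nf [_ Hrf Hnef dep_f]] := root_chain Hf.
have HrD : r \notin D by rewrite -Hrz.
have bnd m : iter m par f \in D -> (m <= nf)%N.
  by move=> Hm; rewrite leqNgt; apply: contraTN Hm => /ltnW /(iter_after_troot Hrf) ->.
have exP : exists m, iter m par f \in D by exists 0%N.
case: (ex_maxnP exP bnd) => m Hm Hmax.
have Hmr : iter m par f != r by apply: contraTneq Hm => ->.
have Hmnf : (m < nf)%N.
  by rewrite ltnNge; apply: contraNN Hmr => /(iter_after_troot Hrf) ->.
have HnbD : iter m.+1 par f \notin D by apply/negP => /Hmax; rewrite ltnn.
exists m; split => //.
set k := (nf - m.+1)%N; have Hk : (k + m.+1)%N = nf by rewrite subnK.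
have W1 : is_walk (~: D) e z r (traject par z nz.+1).
  by rewrite -Hrz; apply: chain_walk => // i _; rewrite inE.
have W2 : is_walk (~: D) e (iter m.+1 par f) r (traject par (iter m.+1 par f) k.+1).
  rewrite -Hrf -Hk iterD; apply: chain_walk; first exact: iter_tv.
    by move=> i Hi; rewrite -iterD Hnef // -Hk ltn_add2r.
  by move=> i _; rewrite inE -iterD; apply/negP => /Hmax; rewrite leqNgt ltn_addl.
have W2r := walk_rev e_sym W2.
exists (traject par z nz.+1 ++ behead (rev (traject par (iter m.+1 par f) k.+1))).
split; first exact: walk_cat W1 W2r.
rewrite (plen_walk_cat wt W1 W2r) -dep_z lerD2l plen_rev // dep_f.
have -> : traject par (iter m.+1 par f) k.+1 = drop m.+1 (traject par f nf.+1).
  have -> : nf.+1 = (m.+1 + k.+1)%N by rewrite -Hk; lia.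
  by rewrite trajectD drop_size_cat ?size_traject.
have HC i : (i <= nf)%N -> iter i par f \in [set: V] by rewrite inE.
by rewrite (plen_drop_le wt_ge0 (chain_walk Hf Hnef HC)) // size_traject.
Qed.

Lemma tree_escape (wt_sym : forall x y, wt x y = wt y x) (e_sym : symmetric e) (S : {set V}) z f :
  r \in S -> z \in S -> z \in tv T -> f \in tv T -> z \notin D -> f \in D ->
  exists nb f', [/\ nb \notin D, f' \in D, f' \in tv T, tree_nbr T S f' nb
    & dist_le wt e (~: D) z nb (dep wt T z + dep wt T f)].
Proof.
move=> HrS HzS Hz Hf HzD HfD.
have [[m Hm]|Hno] := pselect (exists m, iter m par z \in D).
  have [k [Hk HkD Hkr Hpar Hdist]] := escape_up Hz HzD Hm.
  exists (iter k par z), (par (iter k par z)); split => //.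
  - exact: (iter_tv k.+1 Hz).
  - by rewrite /tree_nbr (iter_tv k Hz) Hkr eqxx trunk_iter ?orbT.
  - by apply: dist_le_weaken Hdist _; rewrite lerDl dep_ge0.
have Hout m : iter m par z \notin D by apply/negP => Hm; apply: Hno; exists m.
have [m [Hm Hmr HnbD Hdist]] := escape_down wt_sym e_sym Hz Hf HfD Hout.
exists (par (iter m par f)), (iter m par f); split => //; first exact: iter_tv.
by rewrite /tree_nbr Hmr eqxx.
Qed.
End NonnegWeights.
End Trees.

Lemma argmax_interval (g : nat -> nat) i j : (i <= j)%N ->
  exists2 k, (i <= k <= j)%N & forall m, (i <= m <= j)%N -> (g m <= g k)%N.
Proof.
move=> Hij; have Hi : (i < j.+1)%N by [].
case: (@arg_maxnP _ (Ordinal Hi) (fun m : 'I_j.+1 => i <= m)%N (fun m => g m)) => //=.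
move=> [k Hk] /= Hik Hmax; exists k; first by rewrite Hik -ltnS.
by move=> m /andP[Him Hmj]; apply: (Hmax (Ordinal (Hmj : (m < j.+1)%N))).
Qed.

Section Levels.
Variables (V : finType) (p : nat) (U : nat -> {set V}).
Hypothesis U1 : U 1%N = [set: V].

Lemma lvl_max v l : (0 < l <= p)%N -> v \in U l -> (l <= lvl p U v)%N.
Proof.
move=> /andP[H0 Hl] Hv; have Hl' : (l < p.+1)%N by [].
by apply: (@leq_bigmax_cond _ _ (fun i : 'I_p.+1 => nat_of_ord i) (Ordinal Hl')); rewrite /= H0.
Qed.

Lemma lvl_le v : (lvl p U v <= p)%N.
Proof. by apply/bigmax_leqP => i _; rewrite -ltnS ltn_ord. Qed.

Lemma lvl_in (p_gt0 : (0 < p)%N) v : v \in U (lvl p U v).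
Proof.
have H1 : (1 < p.+1)%N by [].
have P1 : (0 < Ordinal H1)%N && (v \in U (Ordinal H1)) by rewrite /= U1 inE.
rewrite /lvl (@bigop.bigmax_eq_arg _ (Ordinal H1) _ (fun i : 'I_p.+1 => nat_of_ord i) P1).
by case: arg_maxnP => // i /andP[_ Hi] _.
Qed.

Lemma lvl_ge1 (p_gt0 : (0 < p)%N) v : (1 <= lvl p U v)%N.
Proof. by apply: lvl_max; rewrite ?U1 ?inE. Qed.

Lemma Gset_sub_Unext l : (l <= p)%N -> {subset Gset p U l <= ~: Unext p U l}.
Proof.
move=> Hl v; rewrite !inE /Unext; case: eqP => [_|Hne]; first by rewrite inE.
have Hlp : (l < p)%N by rewrite ltn_neqAle Hl andbT; apply/eqP.
by apply: contraTN => HvU; rewrite -ltnNge; apply: lvl_max HvU.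
Qed.

Lemma lvl_Sidx (p_gt0 : (0 < p)%N) v : v \in Sidx p U (lvl p U v).
Proof.
have HvG : v \in Gset p U (lvl p U v) by rewrite inE.
by have := Gset_sub_Unext (lvl_le v) HvG; rewrite !inE lvl_in // andbT.
Qed.

Lemma subpath_in_max_lvl a (P : seq V) i j : (i <= j)%N -> (j < size P)%N ->
  exists2 k, (i <= k <= j)%N &
    forall m, (m <= j)%N -> {subset subpath P i m <= Gset p U (lvl p U (nth a P k))}.
Proof.
move=> Hij Hj; have [k Hk Hmax] := argmax_interval (fun k => lvl p U (nth a P k)) Hij.
exists k => // m Hm x /(mem_subpath a (leq_ltn_trans Hm Hj))[k' [Hik' Hk'm ->]].
by rewrite inE Hmax // Hik' (leq_trans Hk'm Hm).
Qed.
End Levels.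

Lemma one_lt_twice_kk (R : realType) (V : finType) : (3 <= #|V|)%N -> 1 < 2 * kk R V.
Proof.
move=> V3; have : (2 / 3 : R) <= kk R V.
  apply: le_trans (_ : ln (3 : R) <= _); last first.
    by rewrite /kk /nR ler_ln ?posrE ?ler_nat // ltr0n; apply: leq_trans V3.
  have := @le_ln1Dx R (- (2 / 3)) ltac:(lra).
  by rewrite (_ : 1 + - (2 / 3) = (3 : R)^-1) ?lnV ?posrE; [lra | | field].
lra.
Qed.

Lemma eps4_scale (R : realType) (k e3 : R) : 1 < 2 * k -> 0 < e3 ->
  0 < e3 / (4 * k - 2) /\ e3 = (2 * k - 1) * (2 * (e3 / (4 * k - 2))).
Proof.
move=> k_gt e3_gt0; rewrite (_ : 4 * k - 2 = 2 * (2 * k - 1)); last by ring.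
split; first by rewrite divr_gt0 // mulr_gt0 //; lra.
by field; lra.
Qed.

Section Hierarchy.
Variables (R : realType) (V : finType) (e : rel V) (wt : V -> V -> R).
Variables (cov : {set V} -> {set V} -> V -> rtree V) (p : nat) (U : nat -> {set V}).
Variables (D : {set V}) (s0 t0 : V).
Local Notation VHs := (VH cov p U D s0 t0).

Lemma mem_VH i w f x : in_calT p U i w -> f \in tv (Ttree cov p U i w) ->
  tree_nbr (Ttree cov p U i w) (Sidx p U i) f x -> f \in D -> x \notin D -> x \in VHs.
Proof.
move=> Hiw Hf Hnbr HfD HxD; apply/setDP; split => //.
apply/setUP; right; apply/bigcupP; exists f => //; rewrite inE.
have Hi : (i < p.+1)%N by case/andP: Hiw => /andP[_].
by apply/existsP; exists (Ordinal Hi); apply/existsP; exists w; rewrite Hiw Hf.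
Qed.

Hypothesis cover : forall Rm S : {set V}, is_tree_cover e wt (~: Rm) (S :\: Rm) (cov Rm S).
Hypothesis wt_ge0 : forall x y, e x y -> 0 <= wt x y.
Hypothesis wt_sym : forall x y, wt x y = wt y x.
Hypothesis e_sym : symmetric e.
Hypothesis stretch_ge0 : 0 <= 2 * kk R V - 1.

Lemma exists_close_VH l z f Q : (0 < l <= p)%N -> z \in Sidx p U l -> z \notin D -> f \in D ->
  is_walk (~: Unext p U l) e z f Q ->
  exists2 nb, nb \in VHs & dist_le wt e (~: D) z nb ((2 * kk R V - 1) * plen wt Q).
Proof.
move=> Hl HzS HzD HfD HQ.
have [Psh Hsh Hle] := exists_shortest wt_ge0 HQ.
case: (cover (Unext p U l) (U l)) => _ Htree Hcover _.
have [w Hw [Hzt Hft Hdep]] := Hcover z f Psh HzS (walk_end_mem HQ) Hsh.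
have [Hwf Hroot] := Htree w Hw.
have HrS : troot (Ttree cov p U l w) \in Sidx p U l by rewrite /Ttree Hroot.
have [nb [f' [HnbD Hf'D Hf'T Hnbr Hdist]]] :=
  tree_escape Hwf wt_ge0 wt_sym e_sym HrS HzS Hzt Hft HzD HfD.
exists nb; first by apply: (mem_VH (i := l) (w := w)) Hf'T Hnbr Hf'D HnbD; rewrite /in_calT Hl.
by apply: dist_le_weaken Hdist _; apply: le_trans Hdep _; apply: ler_wpM2l.
Qed.
End Hierarchy.

Theorem theorem4p3 (R : realType) (V : finType) (e : rel V) (wt : V -> V -> R)
    (W : R) (d : nat) (c : R) (cov : {set V} -> {set V} -> V -> rtree V)
    (D : {set V}) (p : nat) (U : nat -> {set V}) (s0 t0 : V) (eps : R)
    (u v : V) (P : seq V) :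
  (3 <= #|V|)%N ->
  symmetric e -> irreflexive e ->
  (forall x y, wt x y = wt y x) ->
  (forall x y, e x y -> 1 <= wt x y <= W) ->
  unique_sp wt e ->
  (2 <= d)%N -> 1 <= c ->
  (forall Rm S : {set V}, is_tree_cover e wt (~: Rm) (S :\: Rm) (cov Rm S)) ->
  (#|D| <= d)%N ->
  (1 <= p)%N -> U 1%N = [set: V] ->
  (forall i, (1 <= i < p)%N -> hchild (s_param V d c) cov d (U i) (U i.+1)) ->
  (forall f, f \in D -> forall i w, in_calT p U i w ->
     (pdeg (Ttree cov p U i w) (Sidx p U i) f)%:R <= s_param V d c) ->
  s0 \notin D -> t0 \notin D ->
  0 < eps < 1 ->
  let VHs := VH cov p U D s0 t0 in
  let eps3 := eps / (2 * (#|VHs|)%:R) in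
  let eps4 := eps3 / (4 * kk R V - 2) in
  u \in VHs -> v \in VHs ->
  is_shortest wt (~: D) e u v P ->
  far wt u e (~: D) VHs eps3 P ->
  expath wt u e p (Gset p U) eps4 P.
Proof.
move=> V3 e_sym _ wt_sym wt_bnd _ _ _ cover _ p_gt0 U1 _ _ _ _ /andP[eps_gt0 _].
move=> VHs eps3 eps4 Hu _ [HPw HPmin] Hfar i j Hseg.
have wt_ge1 x y : e x y -> 1 <= wt x y by case/wt_bnd/andP.
have wt_ge0 x y : e x y -> 0 <= wt x y by move/wt_ge1; apply: le_trans.
have stretch_ge0 : 0 <= 2 * kk R V - 1 by have := one_lt_twice_kk R V3; lra.
have eps3_gt0 : 0 < eps3 by rewrite divr_gt0 ?mulr_gt0 ?ltr0n //; apply/card_gt0P; exists u.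
have [eps4_gt0 eps3E] := eps4_scale (one_lt_twice_kk R V3) eps3_gt0.
case: (Hseg) => Hi0 Hij Hj _ _; have Hjs : (j < size P)%N by apply: leq_trans Hj (leq_pred _).
have [k Hk sub_Gl] := subpath_in_max_lvl p U u Hij Hjs; case/andP: (Hk) => Hik Hkj.
have Hks : (k < size P)%N by apply: leq_ltn_trans Hjs.
set l := lvl p U (nth u P k); have Hl : (0 < l <= p)%N by rewrite lvl_ge1 // lvl_le.
exists l => //; split=> [|Q HQ]; first exact: (walk_restrict (walk_subpath HPw Hij Hjs) (sub_Gl j _)).
rewrite leNgt; apply/negP => HQlt.
have [f HfQ] := shorter_walk_leaves (conj HPw HPmin) Hij Hjs HQ HQlt; rewrite inE negbK => HfD.
have [Wz HWz HWz_len] :=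
  walk_detour wt_sym e_sym wt_ge0 (walk_restrict (walk_subpath HPw Hik Hks) (sub_Gl k Hkj)) HQ HfQ.
have HzD : nth u P k \notin D by have := walk_mem HPw (mem_nth u Hks); rewrite inE.
have [nb Hnb Hdist] := exists_close_VH s0 t0 cover wt_ge0 wt_sym e_sym stretch_ge0
  Hl (lvl_Sidx U1 p_gt0 _) HzD HfD (walk_subset HWz (Gset_sub_Unext (lvl_le _ _ _))).
apply: (Hfar k _ nb Hnb); first by rewrite (leq_trans Hi0 Hik) (leq_ltn_trans Hkj Hj).
apply: dist_le_weaken Hdist _; rewrite eps3E -mulrA ler_wpM2l //.
have := segment_plen_le wt_ge1 HPw eps4_gt0 Hseg Hk.
have : plen wt (subpath P i k) <= plen wt (subpath P i j).
  by rewrite !plen_subpath // lerD2r (pre_mono HPw wt_ge0).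
lra.
Qed.
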